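(* Let $X$ be a Banach space with $n(X)=1$ that has the BPBpp-nu. Then $X$ is uniformly smooth.
   Context: Let $X$ be a Banach space over $\mathbb{K}\in\{\mathbb{R},\mathbb{C}\}$, $\mathcal{L}(X)$ the bounded linear operators on $X$. $\Pi(X)=\{(x,x^* )\in S_X\times S_{X^*}: x^*(x)=1\}$; $v(T)=\sup\{|x^*(Tx)|:(x,x^* )\in\Pi(X)\}$; $n(X)=\inf\{v(T): T\in\mathcal{L}(X),\ \|T\|=1\}$. $X$ has the BPBpp-nu if for every $\varepsilon>0$ there is $\eta(\varepsilon)>0$ such that whenever $T\in\mathcal{L}(X)$ with $v(T)=1$ and $(x,x^* )\in\Pi(X)$ satisfy $|x^*(Tx)|>1-\eta(\varepsilon)$, there exists $S\in\mathcal{L}(X)$ with $v(S)=1$, $|x^*(Sx)|=1$ and $\|S-T\|<\varepsilon$. *)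

From mathcomp Require Import all_boot all_order all_algebra.
From mathcomp Require Import all_classical all_reals all_analysis.
From mathcomp Require Import complex.
Import Order.TTheory GRing.Theory Num.Theory.
Import numFieldNormedType.Exports.

Set Implicit Arguments.
Unset Strict Implicit.
Unset Printing Implicit Defensive.

Local Open Scope classical_set_scope.
Local Open Scope ring_scope.

Definition RorC (R : realType) (b : bool) : numFieldType :=
  if b then ((R[i])%C : numFieldType) else (R : numFieldType).

Section Banach.
Variables (K : numFieldType) (X : normedModType K).

Definition is_sup (S : set K) (s : K) : Prop :=
  (forall y, S y -> y <= s) /\
  (forall e, 0 < e -> exists2 y, S y & s - e < y).

Definition is_inf (S : set K) (s : K) : Prop :=
  (forall y, S y -> s <= y) /\
  (forall e, 0 < e -> exists2 y, S y & y < s + e).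

Definition lin_functional (f : X -> K) : Prop :=
  forall (a : K) (x y : X), f (a *: x + y) = a * f x + f y.

Definition lin_operator (T : X -> X) : Prop :=
  forall (a : K) (x y : X), T (a *: x + y) = a *: T x + T y.

Definition fnorm_is (f : X -> K) (c : K) : Prop :=
  is_sup [set r | exists2 x : X, `|x| = 1 & r = `|f x|] c.

Definition opnorm_is (T : X -> X) (c : K) : Prop :=
  is_sup [set r | exists2 x : X, `|x| = 1 & r = `|T x|] c.

Definition bounded_op (T : X -> X) : Prop :=
  lin_operator T /\ exists c, opnorm_is T c.

Definition Pi (x : X) (f : X -> K) : Prop :=
  `|x| = 1 /\ lin_functional f /\ fnorm_is f 1 /\ f x = 1.

Definition numrad_is (T : X -> X) (c : K) : Prop :=
  is_sup [set r | exists x f, Pi x f /\ r = `|f (T x)|] c.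

Definition numerical_index_is (c : K) : Prop :=
  is_inf [set r | exists T, [/\ bounded_op T, opnorm_is T 1 & numrad_is T r]] c.

Definition BPBpp_nu : Prop :=
  forall eps : K, 0 < eps -> exists2 eta : K, 0 < eta &
    forall T : X -> X, bounded_op T -> numrad_is T 1 ->
    forall (x : X) (f : X -> K), Pi x f -> 1 - eta < `|f (T x)| ->
    exists S : X -> X, [/\ bounded_op S, numrad_is S 1, `|f (S x)| = 1 &
      exists2 c, opnorm_is (fun z => S z - T z) c & c < eps].

(* uniform smoothness: rho_X(tau)/tau -> 0 as tau -> 0+, where
   rho_X(tau) = sup {(|x + tau y| + |x - tau y|)/2 - 1 : x, y in S_X} *)
Definition uniformly_smooth : Prop :=
  forall eps : K, 0 < eps -> exists2 delta : K, 0 < delta &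
    forall tau : K, 0 < tau -> tau < delta ->
    forall x y : X, `|x| = 1 -> `|y| = 1 ->
      (`|x + tau *: y| + `|x - tau *: y|) / 2 - 1 <= eps * tau.

End Banach.

From mathcomp Require Import all_boot all_order all_algebra.
From mathcomp Require Import all_classical all_reals all_analysis.
From mathcomp Require Import complex.
Import Order.TTheory GRing.Theory Num.Theory.
Import numFieldNormedType.Exports.
From mathcomp Require Import ring lra.
Local Open Scope ring_scope.
Set Implicit Arguments.
Unset Strict Implicit.
Unset Printing Implicit Defensive.

(* Numerical index 1 makes every norm-one operator have v(T) = 1, and forces
   ||S|| <= 1 whenever v(S) = 1.  Applying the BPBpp-nu to rank-one operators
   u |-> g(u) w then shows: every unit vector is almost normed by a functional
   of Pi(X); the first components of Pi(X) are dense in S_X; and a norm-one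
   functional almost norming a direction is eps-close to a contractive
   functional normalising that direction up to a small slack.
   For unit x, y and small real t, a functional almost norming x is thus
   perturbed into functionals almost norming x + t y and x - t y, and an
   elementary scalar inequality bounds (|x + t y| + |x - t y|)/2 - 1 by eps t.
   All of this is done over any numeric field K containing an ordered copy of
   a real field R, where the arithmetic is carried out, and is instantiated
   at the end for K = R and K = R[i]. *)

Section LinearMaps.
Variables (K : numFieldType) (X : normedModType K).

Lemma linf0 (f : X -> K) : lin_functional f -> f 0 = 0.
Proof.
move=> Hf; have := Hf 1 0 0; rewrite scaler0 addr0 mul1r => e.
by apply: (addrI (f 0)); rewrite addr0 -e.
Qed.

Lemma linfZ (f : X -> K) a x : lin_functional f -> f (a *: x) = a * f x.
Proof. by move=> Hf; have := Hf a x 0; rewrite addr0 linf0 // addr0. Qed.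

Lemma linfD (f : X -> K) x y : lin_functional f -> f (x + y) = f x + f y.
Proof. by move=> Hf; have := Hf 1 x y; rewrite scale1r mul1r. Qed.

Lemma linfB (f : X -> K) x y : lin_functional f -> f (x - y) = f x - f y.
Proof. by move=> Hf; rewrite linfD // -scaleN1r linfZ // mulN1r. Qed.

Lemma linT0 (T : X -> X) : lin_operator T -> T 0 = 0.
Proof.
move=> Hf; have := Hf 1 0 0; rewrite scaler0 addr0 scale1r => e.
by apply: (addrI (T 0)); rewrite addr0 -e.
Qed.

Lemma linTZ (T : X -> X) a x : lin_operator T -> T (a *: x) = a *: T x.
Proof. by move=> Hf; have := Hf a x 0; rewrite addr0 linT0 // addr0. Qed.

Lemma linTD (T : X -> X) x y : lin_operator T -> T (x + y) = T x + T y.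
Proof. by move=> Hf; have := Hf 1 x y; rewrite !scale1r. Qed.

Lemma is_sup_ext (S S2 : set K) s :
  (forall y, S2 y <-> S y) -> is_sup S s -> is_sup S2 s.
Proof.
move=> E [H1 H2]; split=> [y /E|e /H2 [y Sy lt]]; first exact: H1.
by exists y => //; apply/E.
Qed.

Lemma is_sup_scale (S S2 : set K) s a : 0 < a ->
  (forall y, S2 y <-> exists2 y0, S y0 & y = a * y0) ->
  is_sup S s -> is_sup S2 (a * s).
Proof.
move=> a0 E [H1 H2]; split=> [y /E [y0 /H1 le ->]|e e0].
  by rewrite ler_pM2l.
have [y0 Sy0 lt] := H2 (e / a) (divr_gt0 e0 a0).
exists (a * y0); first by apply/E; exists y0.
have -> : a * s - e = a * (s - e / a).
  by rewrite mulrBr mulrCA divff ?mulr1 // gt_eqF.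
by rewrite ltr_pM2l.
Qed.

Lemma sup_bound (g : X -> K) c : (forall a x, g (a *: x) = `|a| * g x) ->
  is_sup [set r | exists2 x : X, `|x| = 1 & r = g x] c ->
  forall z, g z <= c * `|z|.
Proof.
move=> gZ Hs z; have [->|z0] := eqVneq z 0.
  have -> : g 0 = 0 by rewrite -[X in g X](scale0r (0 : X)) gZ normr0 mul0r.
  by rewrite normr0 mulr0.
have n0 : 0 < `|z| by rewrite normr_gt0.
have n1 : `| (`|z|^-1 *: z) | = 1.
  by rewrite normrZ normfV normr_id mulVf ?gt_eqF.
have -> : g z = `|z| * g (`|z|^-1 *: z).
  by rewrite -[in LHS](scale1r z) -(divff (lt0r_neq0 n0)) -scalerA gZ normr_id.
by rewrite mulrC ler_pM2r //; case: Hs => H _; apply: H; exists (`|z|^-1 *: z).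
Qed.

Lemma fnorm_bound (f : X -> K) c : lin_functional f -> fnorm_is f c ->
  forall z, `|f z| <= c * `|z|.
Proof. by move=> Hf; apply: sup_bound => a x; rewrite linfZ // normrM. Qed.

Lemma opnorm_bound (T : X -> X) c : lin_operator T -> opnorm_is T c ->
  forall z, `|T z| <= c * `|z|.
Proof. by move=> Hf; apply: sup_bound => a x; rewrite linTZ // normrZ. Qed.

Lemma rank_one_op (g : X -> K) w : lin_functional g -> fnorm_is g 1 ->
  `|w| = 1 ->
  lin_operator (fun u => g u *: w) /\ opnorm_is (fun u => g u *: w) 1.
Proof.
move=> lg ng w1; split; first by move=> a x y; rewrite lg scalerDl scalerA.
by apply: is_sup_ext ng => y; split; case=> x x1 ->; exists x => //;
  rewrite normrZ w1 mulr1.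
Qed.

Lemma rotate_functional (f : X -> K) mu : lin_functional f -> fnorm_is f 1 ->
  `|mu| = 1 ->
  lin_functional (fun u => mu * f u) /\ fnorm_is (fun u => mu * f u) 1.
Proof.
move=> lf nf m1; split; first by move=> a x y; rewrite lf mulrDr mulrCA.
by apply: is_sup_ext nf => y; split; case=> x x1 ->; exists x => //;
  rewrite normrM m1 mul1r.
Qed.

Lemma Pi_bound x (f : X -> K) : Pi x f -> forall z, `|f z| <= `|z|.
Proof.
by case=> _ [lf [nf _]] z; have := fnorm_bound lf nf z; rewrite mul1r.
Qed.

End LinearMaps.

Section NumericalIndexOne.
Variables (K : numFieldType) (X : normedModType K).
(* Bounded sets of nonnegative scalars have suprema (true for K = R, R[i]). *)
Hypothesis Ksup : forall S : set K, (exists y, S y) ->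
  (forall y, S y -> 0 <= y <= 1) -> exists s, is_sup S s.
Hypothesis nX : numerical_index_is X 1.

(* n(X) is an infimum over numerical radii, so Pi(X) is not empty. *)
Lemma Pi_nonempty : exists x (f : X -> K), Pi x f.
Proof.
case: nX => _ /(_ 1 ltr01) [_ [T [_ _ [_ /(_ 1 ltr01) [_ [x [f [P _]]] _]]]] _].
by exists x, f.
Qed.

Lemma numrad_le_opnorm (T : X -> X) : lin_operator T -> opnorm_is T 1 ->
  forall x f, Pi x f -> `|f (T x)| <= 1.
Proof.
move=> lT nT x f P; apply: le_trans (Pi_bound P _) _.
by have := opnorm_bound lT nT x; rewrite mul1r; case: P => -> _.
Qed.

Lemma numrad_of_norm_one (T : X -> X) : lin_operator T -> opnorm_is T 1 ->
  numrad_is T 1.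
Proof.
move=> lT nT.
have [r Hr] : exists r, numrad_is T r.
  apply: Ksup.
    by have [x [f P]] := Pi_nonempty; exists `|f (T x)|; exists x, f.
  by move=> y [x [f [P ->]]]; rewrite normr_ge0 (numrad_le_opnorm lT nT P).
have : 1 <= r.
  by case: nX => H _; apply: H; exists T; split => //; split => //; exists 1.
rewrite le_eqVlt => /orP [/eqP -> //|lt1r].
case: Hr => _ /(_ (r - 1)); rewrite subr_gt0 => /(_ lt1r) [y [x [f [P ->]]]].
rewrite opprB addrC subrK => lt.
by move: (numrad_le_opnorm lT nT P); rewrite (lt_geF lt).
Qed.

(* n(X) = 1: an operator of numerical radius 1 is a contraction
   (otherwise S/||S|| would be a norm-one operator with v < 1). *)
Lemma numrad_one_contraction (S : X -> X) : bounded_op S -> numrad_is S 1 ->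
  forall z, `|S z| <= `|z|.
Proof.
move=> [lS [c Hc]] nS z.
have [x0 [f0 [x01 _]]] := Pi_nonempty.
have c0 : 0 <= c.
  by apply: le_trans (normr_ge0 (S x0)) _; case: Hc => H _; apply: H; exists x0.
case: (real_leP (ger0_real c0) (@real1 K)) => [c1|c1].
  by apply: le_trans (opnorm_bound lS Hc z) _; rewrite -[leRHS]mul1r ler_wpM2r.
exfalso.
have cp : 0 < c by apply: lt_trans c1.
have ci0 : 0 < c^-1 by rewrite invr_gt0.
pose S' := fun z => c^-1 *: S z.
have lS' : lin_operator S'.
  by move=> a x y; rewrite /S' lS scalerDr !scalerA mulrC.
have nS' : opnorm_is S' 1.
  rewrite -(mulVf (lt0r_neq0 cp)); apply: (is_sup_scale ci0 _ Hc) => y; split.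
    case=> x x1 ->; exists `|S x|; first by exists x.
    by rewrite /S' normrZ ger0_norm // ltW.
  by case=> _ [x x1 ->] ->; exists x => //; rewrite /S' normrZ ger0_norm // ltW.
have rS' : numrad_is S' (c^-1 * 1).
  apply: (is_sup_scale ci0 _ nS) => y; split.
    case=> x [f [P ->]]; exists `|f (S x)|; first by exists x, f.
    by case: (P) => _ [lf _]; rewrite /S' linfZ // normrM ger0_norm // ltW.
  case=> _ [x [f [P ->]]] ->; exists x, f; split => //.
  by case: (P) => _ [lf _]; rewrite /S' linfZ // normrM ger0_norm // ltW.
have : 1 <= c^-1 * 1.
  by case: nX => H _; apply: H; exists S'; split => //; split => //; exists 1.
by rewrite mulr1 invf_ge1 // (lt_geF c1).
Qed.

(* Every unit vector w is almost normed by the functional of some pair in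
   Pi(X): apply v(f0 (.) w) = 1 to a rank-one operator. *)
Lemma near_norming w : `|w| = 1 -> forall d, 0 < d ->
  exists z (f : X -> K), Pi z f /\ 1 - d < `|f w|.
Proof.
move=> w1 d d0; have [x0 [f0 P0]] := Pi_nonempty.
have [_ [lf0 [nf0 _]]] := P0.
have [lT nT] := rank_one_op lf0 nf0 w1.
case: (numrad_of_norm_one lT nT) => _ /(_ d d0) [_ [z [f [P ->]]] lt].
exists z, f; split => //; apply: lt_le_trans lt _.
case: (P) => [z1 [lf _]]; rewrite linfZ // normrM -[leRHS]mul1r ler_wpM2r //.
by apply: le_trans (Pi_bound P0 z) _; rewrite z1.
Qed.

Definition bpb_at (eps eta : K) :=
  forall T : X -> X, bounded_op T -> numrad_is T 1 ->
  forall (x : X) (f : X -> K), Pi x f -> 1 - eta < `|f (T x)| ->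
  exists S : X -> X, [/\ bounded_op S, numrad_is S 1, `|f (S x)| = 1 &
    exists2 c, opnorm_is (fun z => S z - T z) c & c < eps].

Lemma rank_one_attaining eps eta : bpb_at eps eta ->
  forall z (k g : X -> K) w, Pi z k -> lin_functional g -> fnorm_is g 1 ->
  `|w| = 1 -> 1 - eta < `|g z| * `|k w| ->
  exists S : X -> X, [/\ lin_operator S, (forall u, `|S u| <= `|u|),
    `|k (S z)| = 1 & forall u, `|S u - g u *: w| <= eps * `|u|].
Proof.
move=> H z k g w P lg ng w1 lt.
have [lT nT] := rank_one_op lg ng w1.
have bT : bounded_op (fun u => g u *: w) by split => //; exists 1.
have [_ [lk _]] := P.
have := H _ bT (numrad_of_norm_one lT nT) z k P; rewrite linfZ // normrM.
move=> /(_ lt) [S [[lS bS] nS kS [c Hc ce]]].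
exists S; split => //; first exact: numrad_one_contraction.
have lD : lin_operator (fun z => S z - g z *: w).
  by move=> a x y; rewrite lS (lT a x y) opprD addrACA scalerBr.
move=> u; apply: le_trans (opnorm_bound lD Hc u) _.
by rewrite ler_wpM2r // ltW.
Qed.

Hypothesis bpb : BPBpp_nu X.

Lemma Pi_dense eps : 0 < eps -> forall u0, `|u0| = 1 ->
  exists u1 (k : X -> K), Pi u1 k /\ `|u1 - u0| <= eps.
Proof.
move=> e0 u0 u01; have [eta eta0 H] := bpb e0.
have [z [f [P lt]]] := near_norming u01 eta0.
have [z1 [lf [nf fz]]] := P.
have := rank_one_attaining H P lf nf u01; rewrite fz normr1 mul1r.
move=> /(_ lt) [S [lS bS fS dS]].
have Sz1 : `|S z| = 1.
  apply/le_anti/andP; split; first by rewrite -z1 bS.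
  by rewrite -fS (Pi_bound P).
have fS0 : f (S z) != 0 by rewrite -normr_eq0 fS oner_neq0.
have mu1 : `|(f (S z))^-1| = 1 by rewrite normfV fS invr1.
have [lk nk] := rotate_functional lf nf mu1.
exists (S z), (fun u => (f (S z))^-1 * f u); split.
  by split => //; split => //; split => //; rewrite mulVf.
by have := dS z; rewrite fz scale1r z1 mulr1.
Qed.

Lemma attaining_perturbation eps eta : bpb_at eps eta ->
  forall (h : X -> K) v eps1, lin_functional h -> fnorm_is h 1 ->
  0 < `|v| -> 0 < eps1 -> 1 - eta < `|h (`|v|^-1 *: v)| - eps1 ->
  exists h' : X -> K, [/\ lin_functional h', (forall u, `|h' u| <= `|u|),
    (forall u, `|h' u - h u| <= eps * `|u|) & `|v| <= `|h' v| + `|v| * eps1].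
Proof.
move=> H h v eps1 lh nh v0 e10 lt.
set u0 := `|v|^-1 *: v.
have u01 : `|u0| = 1 by rewrite normrZ normfV normr_id mulVf // lt0r_neq0.
have [u1 [k [P d1]]] := Pi_dense e10 u01.
have [u11 [lk [nk ku1]]] := P.
have : 1 - eta < `|h u1| * `|k u1|.
  rewrite ku1 normr1 mulr1; apply: lt_le_trans lt _.
  rewrite -/u0 lerBlDr; have -> : u0 = u1 + (u0 - u1) by rewrite addrC subrK.
  rewrite linfD //; apply: le_trans (ler_normD _ _) _; rewrite lerD2l.
  by apply: le_trans (fnorm_bound lh nh _) _; rewrite mul1r distrC.
move/(rank_one_attaining H P lh nh u11) => [S [lS bS kS dS]].
exists (fun u => k (S u)); split.
- by move=> a x y; rewrite lS lk.
- by move=> u; apply: le_trans (Pi_bound P _) (bS u).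
- move=> u; have -> : h u = k (h u *: u1) by rewrite linfZ // ku1 mulr1.
  by rewrite -linfB //; apply: le_trans (Pi_bound P _) (dS u).
have e : v = `|v| *: u0 by rewrite /u0 scalerA divff ?scale1r // lt0r_neq0.
have -> : k (S v) = `|v| * k (S u0) by rewrite {1}e linTZ // linfZ.
rewrite normrM normr_id -mulrDr -[leLHS]mulr1 ler_wpM2l //.
rewrite -kS; have -> : S u1 = S u0 + S (u1 - u0).
  by rewrite -linTD // addrC subrK.
rewrite linfD //; apply: le_trans (ler_normD _ _) _; rewrite lerD2l.
by apply: le_trans (Pi_bound P _) _; apply: le_trans (bS _) d1.
Qed.

End NumericalIndexOne.

Lemma normalized_value_bound (R : realFieldType) (t n k a1 M V H : R) :
  0 < t -> t < n / 4 -> k <= n / 8 -> a1 <= n / 8 -> 1 - k < M -> M <= 1 ->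
  1 - t <= V -> V <= 1 + t -> M - t <= H -> t < 1 / 2 -> 0 <= H ->
  1 - n < V^-1 * H - a1.
Proof.
move=> t0 tn kn an kM M1 V1 V2 HM t2 H0.
have V0 : 0 < V by lra.
have : (M - 2 * t) * V <= H.
  by have [h|h] := leP 0 (M - 2 * t); nra.
move=> q; have : M - 2 * t <= V^-1 * H by rewrite [_ * H]mulrC ler_pdivlMr.
lra.
Qed.

Lemma smoothness_arith (R : realFieldType) (e t k a1 A1 A2 P1 P2 D1 D2 : R) :
  0 < e -> 0 < t -> t <= e / 4 -> t <= 1 / 2 -> k <= e / 4 ->
  0 <= a1 -> a1 <= e * t / 8 -> 0 <= A1 -> 0 <= A2 ->
  A1 <= 1 + t -> A2 <= 1 + t ->
  A1 <= P1 + t * (e / 8) + A1 * a1 -> A2 <= P2 + t * (e / 8) + A2 * a1 ->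
  P1 + P2 <= 2 + t * (D1 + D2) + 2 * t ^+ 2 ->
  D1 <= e / 8 + k -> D2 <= e / 8 + k ->
  (A1 + A2) / 2 - 1 <= e * t.
Proof.
move=> e0 t0 te t2 ke a0 ae A10 A20 A1t A2t H1 H2 HP HD1 HD2.
have : A1 * a1 <= 2 * (e * t / 8) by nra.
have : A2 * a1 <= 2 * (e * t / 8) by nra.
have : t * (D1 + D2) <= t * (2 * (e / 8 + e / 4)) by nra.
have : t ^+ 2 <= t * (e / 4) by rewrite expr2; nra.
lra.
Qed.

(* The scalar field K contains an order-embedded copy phi(R) of a real field
   R exhausting its nonnegative elements, and satisfies the two-point
   inequality Kkey; all real arithmetic is then done in R. *)
Section RealEmbedding.
Variables (R : realFieldType) (K : numFieldType) (phi : {rmorphism R -> K}).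
Hypothesis phi_le : forall a b, (phi a <= phi b) = (a <= b).
Hypothesis phi_onto_nonneg : forall y : K, 0 <= y -> exists r, y = phi r.
Hypothesis Kkey : forall p q c t : K,
  `|p| <= 1 -> `|q| <= 1 -> `|c| <= 1 -> 0 <= t -> t <= 1 ->
  `|p + t * c| + `|q - t * c| <= 2 + t * (`|p - 1| + `|q - 1|) + 2 * t ^+ 2.
Hypothesis Ksup : forall S : set K, (exists y, S y) ->
  (forall y, S y -> 0 <= y <= 1) -> exists s, is_sup S s.
Variable X : normedModType K.
Hypothesis nX : numerical_index_is X 1.
Hypothesis bpb : BPBpp_nu X.

Lemma phi_lt a b : (phi a < phi b) = (a < b).
Proof. by rewrite !lt_def phi_le (inj_eq (fmorph_inj phi)). Qed.

Lemma phi_nonneg y : 0 <= y -> exists2 r, y = phi r & 0 <= r.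
Proof.
move=> y0; have [r er] := phi_onto_nonneg y0; exists r => //.
by rewrite -phi_le rmorph0 -er.
Qed.

Lemma phi_pos r : (0 < phi r) = (0 < r).
Proof. by rewrite -(rmorph0 phi) phi_lt. Qed.

Ltac push_phi := rewrite ?(rmorphD, rmorphB, rmorphM, rmorphN, rmorph1, rmorph0,
  fmorphV, rmorph_nat, rmorphXn).

Lemma shifted_direction_normed (n t k a1 M : R) (x y : X) (h : X -> K) s :
  0 < t -> t < n / 4 -> t < 1 / 2 -> k <= n / 8 -> a1 <= n / 8 ->
  0 <= M -> 1 - k < M -> M <= 1 -> `|x| = 1 -> `|y| = 1 ->
  lin_functional h -> fnorm_is h 1 -> h x = phi M -> `|s| = phi t ->
  0 < `|x + s *: y| /\
  1 - phi n < `|h (`|x + s *: y|^-1 *: (x + s *: y))| - phi a1.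
Proof.
move=> t0 tn t2 kn a1n M0 Mk M1 x1 y1 lh nh hx st.
set v := x + s *: y.
have sy : `|s *: y| = phi t by rewrite normrZ y1 mulr1 st.
have hv1 : `|v| <= 1 + phi t by rewrite -x1 -sy ler_normD.
have hv2 : 1 - phi t <= `|v|.
  have : `|x| <= `|v| + `|s *: y|.
    have {1}-> : x = v - s *: y by rewrite /v addrK.
    exact: ler_normB.
  by rewrite x1 sy -lerBlDr.
have hhv : phi M - phi t <= `|h v|.
  rewrite /v (linfD _ _ lh) (linfZ _ _ lh) hx.
  apply: le_trans (lerB_normD _ _); rewrite ger0_norm; last first.
    by rewrite -(rmorph0 phi) phi_le.
  have hy1 : `|h y| <= 1 by have := fnorm_bound lh nh y; rewrite y1 mulr1.
  by rewrite lerD2l lerN2 normrM st -[leRHS]mulr1 ler_wpM2l // ltW // phi_pos.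
have [V eV V0] := phi_nonneg (normr_ge0 v).
have [Hv eHv Hv0] := phi_nonneg (normr_ge0 (h v)).
have r1 : 1 - t <= V by rewrite -phi_le; push_phi; rewrite -eV.
have r2 : V <= 1 + t by rewrite -phi_le; push_phi; rewrite -eV.
have r3 : M - t <= Hv by rewrite -phi_le; push_phi; rewrite -eHv.
split; first by rewrite eV phi_pos; lra.
rewrite (linfZ _ _ lh) normrM normfV normr_id eV eHv.
have := normalized_value_bound t0 tn kn a1n Mk M1 r1 r2 r3 t2 Hv0.
by rewrite -phi_lt; push_phi.
Qed.

Lemma shifted_direction_estimate eps (n t k a1 M : R) (x y : X) (h : X -> K) :
  bpb_at X eps (phi n) -> 0 < t -> t < n / 4 -> t < 1 / 2 -> k <= n / 8 ->
  0 < a1 -> a1 <= n / 8 -> 0 <= M -> 1 - k < M -> M <= 1 ->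
  `|x| = 1 -> `|y| = 1 -> lin_functional h -> fnorm_is h 1 -> h x = phi M ->
  forall s : K, `|s| = phi t -> exists p : K, [/\ `|p| <= 1,
    `|p - 1| <= eps + phi k &
    `|x + s *: y| <= `|p + s * h y| + phi t * eps + `|x + s *: y| * phi a1].
Proof.
move=> H t0 tn t2 kn a10 a1n M0 Mk M1 x1 y1 lh nh hx s st.
have [v0 cond] :=
  shifted_direction_normed t0 tn t2 kn a1n M0 Mk M1 x1 y1 lh nh hx st.
have pa10 : 0 < phi a1 by rewrite phi_pos.
have [h' [lh' bh' dh' est]] :=
  attaining_perturbation Ksup nX bpb H lh nh v0 pa10 cond.
exists (h' x); split.
- by rewrite -x1 bh'.
- apply: le_trans (ler_distD (h x) _ _) _; apply: lerD.
    by have := dh' x; rewrite x1 mulr1.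
  rewrite hx distrC ger0_norm; last by rewrite subr_ge0 -(rmorph1 phi) phi_le.
  by rewrite -(rmorph1 phi) -rmorphB phi_le; lra.
apply: le_trans est _; rewrite lerD2r.
have -> : h' (x + s *: y) = (h' x + s * h y) + s * (h' y - h y).
  by rewrite (linfD _ _ lh') (linfZ _ _ lh'); ring.
apply: le_trans (ler_normD _ _) _; rewrite lerD2l normrM st.
by apply: ler_wpM2l; [rewrite ltW // phi_pos | have := dh' y; rewrite y1 mulr1].
Qed.

Lemma smoothness_from_two_sides (e t k a1 : R) (x y : X) (c p1 p2 : K) :
  0 < e -> 0 < t -> t <= e / 4 -> t <= 1 / 2 -> k <= e / 4 ->
  0 < a1 -> a1 <= e * t / 8 -> `|x| = 1 -> `|y| = 1 -> `|c| <= 1 ->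
  `|p1| <= 1 -> `|p1 - 1| <= phi e / 8 + phi k ->
  `|x + phi t *: y| <=
    `|p1 + phi t * c| + phi t * (phi e / 8) + `|x + phi t *: y| * phi a1 ->
  `|p2| <= 1 -> `|p2 - 1| <= phi e / 8 + phi k ->
  `|x - phi t *: y| <=
    `|p2 - phi t * c| + phi t * (phi e / 8) + `|x - phi t *: y| * phi a1 ->
  (`|x + phi t *: y| + `|x - phi t *: y|) / 2 - 1 <= phi e * phi t.
Proof.
move=> e0 t0 te t2 ke a10 a1e x1 y1 c1 p11 p1d e1 p21 p2d e2.
have pt0 : 0 <= phi t by rewrite ltW // phi_pos.
have pt1 : phi t <= 1 by rewrite -(rmorph1 phi) phi_le; lra.
have kk := Kkey p11 p21 c1 pt0 pt1.
have nty : `|phi t *: y| = phi t by rewrite normrZ y1 mulr1 ger0_norm.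
have [A1 eA1 A10] := phi_nonneg (normr_ge0 (x + phi t *: y)).
have [A2 eA2 A20] := phi_nonneg (normr_ge0 (x - phi t *: y)).
have [P1 eP1 _] := phi_nonneg (normr_ge0 (p1 + phi t * c)).
have [P2 eP2 _] := phi_nonneg (normr_ge0 (p2 - phi t * c)).
have [D1 eD1 _] := phi_nonneg (normr_ge0 (p1 - 1)).
have [D2 eD2 _] := phi_nonneg (normr_ge0 (p2 - 1)).
have A1t : A1 <= 1 + t.
  rewrite -phi_le; push_phi; rewrite -eA1.
  by apply: le_trans (ler_normD _ _) _; rewrite x1 nty.
have A2t : A2 <= 1 + t.
  rewrite -phi_le; push_phi; rewrite -eA2.
  by apply: le_trans (ler_normB _ _) _; rewrite x1 nty.
have f1 : A1 <= P1 + t * (e / 8) + A1 * a1.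
  by rewrite -phi_le; push_phi; rewrite -eA1 -eP1.
have f2 : A2 <= P2 + t * (e / 8) + A2 * a1.
  by rewrite -phi_le; push_phi; rewrite -eA2 -eP2.
have f3 : P1 + P2 <= 2 + t * (D1 + D2) + 2 * t ^+ 2.
  by rewrite -phi_le; push_phi; rewrite -eP1 -eP2 -eD1 -eD2.
have f4 : D1 <= e / 8 + k by rewrite -phi_le; push_phi; rewrite -eD1.
have f5 : D2 <= e / 8 + k by rewrite -phi_le; push_phi; rewrite -eD2.
have := smoothness_arith e0 t0 te t2 ke (ltW a10) a1e A10 A20 A1t A2t
  f1 f2 f3 f4 f5.
by rewrite -phi_le; push_phi; rewrite -eA1 -eA2.
Qed.

(* A unit vector x is almost normed by a norm-one functional h whose value
   h x is a nonnegative real phi M: rotate a functional from near_norming. *)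
Lemma real_norming_functional (x : X) (k : R) : `|x| = 1 -> 0 < k ->
  k <= 1 / 2 -> exists (h : X -> K) (M : R), [/\ lin_functional h,
    fnorm_is h 1, h x = phi M, 0 <= M & 1 - k < M <= 1].
Proof.
move=> x1 k0 k2; rewrite -phi_pos in k0.
have [z [f [P lt1]]] := near_norming Ksup nX x1 k0.
have [_ [lf [nf _]]] := P.
have [M eM M0] := phi_nonneg (normr_ge0 (f x)).
have Mk : 1 - k < M by rewrite -phi_lt; push_phi; rewrite -eM.
have fx0 : f x != 0 by rewrite -normr_eq0 eM gt_eqF // phi_pos; lra.
pose mu := `|f x| / f x.
have mu1 : `|mu| = 1 by rewrite /mu normrM normfV normr_id mulfV // normr_eq0.
have [lh nh] := rotate_functional lf nf mu1.
exists (fun u => mu * f u), M; split => //; first by rewrite /mu divfK.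
by rewrite Mk -phi_le rmorph1 -eM -x1 (Pi_bound P).
Qed.

(* The theorem for any such scalar field K: given eps, choose eta from the
   BPBpp-nu for eps/8 and take delta = min(eta/4, eps/4, 1/2). *)
Theorem uniformly_smooth_of_real_embedding : uniformly_smooth X.
Proof.
move=> eps eps0; have [e ee _] := phi_nonneg (ltW eps0); subst eps.
have e0 : 0 < e by rewrite -phi_pos.
have [eta eta0 H] := bpb (divr_gt0 eps0 (ltr0n _ 8)).
have [n en _] := phi_nonneg (ltW eta0); subst eta.
have n0 : 0 < n by rewrite -phi_pos.
pose d := Num.min (n / 4) (Num.min (e / 4) (1 / 2)).
exists (phi d); first by rewrite phi_pos !lt_min !divr_gt0.
move=> tau tau0 taud x y x1 y1; have [t et _] := phi_nonneg (ltW tau0).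
subst tau; have t0 : 0 < t by rewrite -phi_pos.
move: taud; rewrite phi_lt /d !lt_min => /andP [tn /andP [te t2]].
(* k controls how well x is normed, a1 the slack in the perturbation *)
pose k := Num.min (e / 4) (Num.min (n / 8) (1 / 2)).
pose a1 := Num.min (e * t / 8) (n / 8).
have [ke kn k2] : [/\ k <= e / 4, k <= n / 8 & k <= 1 / 2].
  by split; rewrite /k !ge_min lexx ?orbT.
have [a1e a1n] : a1 <= e * t / 8 /\ a1 <= n / 8.
  by split; rewrite /a1 !ge_min lexx ?orbT.
have k0 : 0 < k by rewrite !lt_min !divr_gt0.
have a10 : 0 < a1 by rewrite /a1 !lt_min !divr_gt0 ?mulr_gt0.
have [h [M [lh nh hx M0 /andP [Mk M1]]]] := real_norming_functional x1 k0 k2.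
have side := shifted_direction_estimate H t0 tn t2 kn a10 a1n M0 Mk M1
  x1 y1 lh nh hx.
have [p1 [p11 p1d e1]] := side (phi t) (ger0_norm (ltW tau0)).
have tN : `|- phi t| = phi t by rewrite normrN ger0_norm // ltW.
have [p2 [p21 p2d e2]] := side (- phi t) tN.
rewrite scaleNr mulNr in e2.
have hy1 : `|h y| <= 1 by have := fnorm_bound lh nh y; rewrite y1 mulr1.
exact: (smoothness_from_two_sides e0 t0 (ltW te) (ltW t2) ke a10 a1e x1 y1 hy1
  p11 p1d e1 p21 p2d e2).
Qed.

End RealEmbedding.

Lemma real_one_point_estimate (R : realFieldType) (p c t : R) :
  `|p| <= 1 -> `|c| <= 1 -> 0 <= t -> t <= 1 ->
  `|p + t * c| <= 1 + t * c + t * `|p - 1| + t ^+ 2.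
Proof.
rewrite !ler_norml => /andP [p1 p2] /andP [c1 c2] t0 t1.
rewrite (ler0_norm (_ : p - 1 <= 0)); last by lra.
by apply/andP; split; rewrite expr2; nra.
Qed.

Lemma real_two_point_estimate (R : realFieldType) (p q c t : R) :
  `|p| <= 1 -> `|q| <= 1 -> `|c| <= 1 -> 0 <= t -> t <= 1 ->
  `|p + t * c| + `|q - t * c| <= 2 + t * (`|p - 1| + `|q - 1|) + 2 * t ^+ 2.
Proof.
move=> p1 q1 c1 t0 t1.
have h1 := real_one_point_estimate p1 c1 t0 t1.
have c1' : `|- c| <= 1 by rewrite normrN.
have := real_one_point_estimate q1 c1' t0 t1; rewrite mulrN; lra.
Qed.

Lemma real_bounded_sup (R : realType) (S : set R) : (exists y, S y) ->
  (forall y, S y -> 0 <= y <= 1) -> exists s, is_sup S s.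
Proof.
move=> [y0 Sy0] bnd.
have hs : has_sup S by split; [exists y0 | exists 1 => y /bnd /andP []].
exists (sup S); split; first by move=> y Sy; apply: sup_upper_bound.
by move=> e e0; have [y Sy lt] := sup_adherent e0 hs; exists y.
Qed.

Lemma complex_one_point_estimate (R : rcfType) (a b e f t : R) :
  a ^+ 2 + b ^+ 2 <= 1 -> e ^+ 2 + f ^+ 2 <= 1 -> 0 <= t -> t <= 1 ->
  Num.sqrt ((a + t * e) ^+ 2 + (b + t * f) ^+ 2) <=
  1 + t * e + t * Num.sqrt ((a - 1) ^+ 2 + b ^+ 2) + t ^+ 2.
Proof.
move=> ab ef t0 t1.
set D := Num.sqrt ((a - 1) ^+ 2 + b ^+ 2).
have D0 : 0 <= D by apply: sqrtr_ge0.
have D2 : D ^+ 2 = (a - 1) ^+ 2 + b ^+ 2.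
  by rewrite /D sqr_sqrtr // addr_ge0 // sqr_ge0.
(* Cauchy-Schwarz: <(a - 1, b), (e, f)> <= |(a - 1, b)| *)
have cs : (a - 1) * e + b * f <= D.
  have [h|h] := leP ((a - 1) * e + b * f) 0; first by lra.
  have : ((a - 1) * e + b * f) ^+ 2 <= D ^+ 2.
    rewrite D2; have : 0 <= ((a - 1) * f - b * e) ^+ 2 by apply: sqr_ge0.
    rewrite !expr2 in ab ef * => h2; nra.
  rewrite !expr2 => h2; nra.
set W := (a + t * e) ^+ 2 + (b + t * f) ^+ 2.
set Rh := 1 + t * e + t * D + t ^+ 2.
have e1 : -1 <= e by rewrite !expr2 in ef; nra.
have Rh0 : 0 <= Rh by rewrite /Rh expr2; nra.
have W1 : W <= 1 + 2 * t * (e + D) + t ^+ 2.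
  have s1 : t * ((a - 1) * e + b * f) <= t * D by apply: ler_wpM2l.
  have s2 : t ^+ 2 * (e ^+ 2 + f ^+ 2) <= t ^+ 2 * 1.
    by apply: ler_wpM2l => //; apply: sqr_ge0.
  rewrite /W !expr2 in ab s2 *; nra.
have W2 : 1 + 2 * t * (e + D) + t ^+ 2 <= Rh ^+ 2.
  have : 0 <= (t * e + t * D + t ^+ 2) ^+ 2 by apply: sqr_ge0.
  rewrite /Rh !expr2; nra.
rewrite -(ger0_norm Rh0) -sqrtr_sqr; apply: ler_wsqrtr; exact: le_trans W2.
Qed.

Section ComplexScalars.
Local Open Scope complex_scope.
Lemma complex_nonneg_real (R : rcfType) (z : R[i]) :
  0 <= z -> exists r : R, z = r%:C.
Proof. by case: z => a b; rewrite lecE /= => /andP [/eqP -> _]; exists a. Qed.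

Lemma complex_norm_le1 (R : rcfType) (a b : R) :
  `|a +i* b| <= 1 -> a ^+ 2 + b ^+ 2 <= 1.
Proof.
rewrite normc_def lecE /= => h.
have s0 := sqrtr_ge0 (a ^+ 2 + b ^+ 2).
have e : Num.sqrt (a ^+ 2 + b ^+ 2) ^+ 2 = a ^+ 2 + b ^+ 2.
  by rewrite sqr_sqrtr // addr_ge0 // sqr_ge0.
rewrite -e expr2; nra.
Qed.

Lemma complex_two_point_estimate (R : rcfType) (p q c t : R[i]) :
  `|p| <= 1 -> `|q| <= 1 -> `|c| <= 1 -> 0 <= t -> t <= 1 ->
  `|p + t * c| + `|q - t * c| <= 2 + t * (`|p - 1| + `|q - 1|) + 2 * t ^+ 2.
Proof.
move=> p1 q1 c1 t0 t1; have [t' et] := complex_nonneg_real t0; subst t.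
have {}t0 : 0 <= t' by move: t0; rewrite lecR.
have {}t1 : t' <= 1 by move: t1; rewrite lecR.
move: p1 q1 c1; case: p => a b; case: q => a' b'; case: c => e f.
move=> /complex_norm_le1 ab /complex_norm_le1 ab' /complex_norm_le1 ef.
have h1 := complex_one_point_estimate ab ef t0 t1.
have ef' : (- e) ^+ 2 + (- f) ^+ 2 <= 1 by rewrite !sqrrN.
have := complex_one_point_estimate ab' ef' t0 t1; rewrite !mulrN => h2.
rewrite !normc_def lecE; simpc => /=.
rewrite ?(mul0r, mulr0, subr0, addr0, add0r, sub0r) -expr2; lra.
Qed.

Lemma complex_bounded_sup (R : realType) (S : set R[i]) : (exists y, S y) ->
  (forall y, S y -> 0 <= y <= 1) -> exists s, is_sup S s.
Proof.
move=> [y0 Sy0] bnd.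
pose S' : set R := fun r => S r%:C.
have hs : has_sup S'.
  split.
    have /andP [h0 _] := bnd _ Sy0; have [r er] := complex_nonneg_real h0.
    by exists r; rewrite /S' /= -er.
  by exists 1 => r /bnd /andP [_]; rewrite lecR.
exists (sup S')%:C; split.
  move=> y Sy; have /andP [h0 _] := bnd _ Sy.
  have [r er] := complex_nonneg_real h0; subst y.
  by rewrite lecR; apply: sup_upper_bound.
move=> e e0; have [e' ee] := complex_nonneg_real (ltW e0); subst e.
have e'0 : 0 < e' by move: e0; rewrite ltcR.
have [r Sr lt] := sup_adherent e'0 hs.
by exists r%:C => //; rewrite -rmorphB ltcR.
Qed.

End ComplexScalars.

Unset Implicit Arguments.

Theorem mainTheorem4 (R : realType) (b : bool)
    (X : completeNormedModType (RorC R b)) :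
  numerical_index_is X 1 -> BPBpp_nu X -> uniformly_smooth X.
Proof.
case: b X => X nX bpb.
- exact: (uniformly_smooth_of_real_embedding (phi := real_complex R) (@lecR R)
    (@complex_nonneg_real R) (@complex_two_point_estimate R)
    (@complex_bounded_sup R) nX bpb).
- exact: (uniformly_smooth_of_real_embedding (phi := idfun) (fun a b => erefl)
    (fun y _ => ex_intro _ y erefl) (@real_two_point_estimate R)
    (@real_bounded_sup R) nX bpb).
Qed.
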